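(* The ordinal space $X = [0,\omega_1)$ with the order topology is set strongly star Hurewicz, while its subspace $Y = \{\alpha + 1 : \alpha < \omega_1 \text{ is a limit ordinal}\}$ is not set strongly star Hurewicz.
   Context: For a subset $S$ of a space $X$ and a collection $\mathcal{U}$ of subsets of $X$, ${\rm St}(S,\mathcal{U}) = \bigcup\{U \in \mathcal{U}: U \cap S \neq \emptyset\}$. A space $X$ is set strongly star Hurewicz if for each nonempty $S \subset X$ and each sequence $(\mathcal{U}_n: n\in\mathbb{N})$ of collections of sets open in $X$ with $\overline{S} \subset \bigcup\mathcal{U}_n$ for all $n$, there are finite sets $F_n \subset \overline{S}$ such that each $x \in S$ lies in ${\rm St}(F_n,\mathcal{U}_n)$ for all but finitely many $n$. *)

From Stdlib Require Import List Arith.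

Definition countable_set {T : Type} (A : T -> Prop) : Prop :=
  exists f : T -> nat, forall x y, A x -> A y -> f x = f y -> x = y.

Definition finite_set {T : Type} (F : T -> Prop) : Prop :=
  exists l : list T, forall x, F x <-> In x l.

(* These properties characterize
   ([0,omega_1), <) up to order isomorphism. *)
Definition is_omega1 {T : Type} (lt : T -> T -> Prop) : Prop :=
  (forall x, ~ lt x x) /\
  (forall x y z, lt x y -> lt y z -> lt x z) /\
  (forall x y, lt x y \/ x = y \/ lt y x) /\
  well_founded lt /\
  ~ countable_set (fun _ : T => True) /\
  (forall x, countable_set (fun y => lt y x)).

(* Bounds: None stands for -infinity (lower) / +infinity (upper). *)
Definition lbound {T : Type} (lt : T -> T -> Prop) (a : option T) (x : T) : Prop :=
  match a with None => True | Some a => lt a x end.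
Definition ubound {T : Type} (lt : T -> T -> Prop) (b : option T) (x : T) : Prop :=
  match b with None => True | Some b => lt x b end.

Definition order_open {T : Type} (lt : T -> T -> Prop) (U : T -> Prop) : Prop :=
  forall x, U x -> exists a b : option T,
    lbound lt a x /\ ubound lt b x /\
    (forall y, lbound lt a y -> ubound lt b y -> U y).

Definition sub_open {T : Type} (opn : (T -> Prop) -> Prop) (X V : T -> Prop) : Prop :=
  exists U, opn U /\ (forall x, V x <-> U x /\ X x).

Definition sub_closure {T : Type} (opn : (T -> Prop) -> Prop) (X S : T -> Prop)
  (x : T) : Prop :=
  X x /\ forall V, sub_open opn X V -> V x -> exists y, S y /\ V y.

Definition star {T : Type} (F : T -> Prop) (Us : (T -> Prop) -> Prop) (x : T) : Prop :=
  exists V, Us V /\ (exists y, F y /\ V y) /\ V x.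

Definition set_strongly_star_Hurewicz {T : Type} (opn : (T -> Prop) -> Prop)
  (X : T -> Prop) : Prop :=
  forall S : T -> Prop,
    (forall x, S x -> X x) -> (exists x, S x) ->
    forall Us : nat -> ((T -> Prop) -> Prop),
      (forall n V, Us n V -> sub_open opn X V) ->
      (forall n x, sub_closure opn X S x -> exists V, Us n V /\ V x) ->
      exists F : nat -> (T -> Prop),
        (forall n, finite_set (F n)) /\
        (forall n x, F n x -> sub_closure opn X S x) /\
        (forall x, S x -> exists N, forall n, N <= n -> star (F n) (Us n) x).

(* a is a limit ordinal: nonzero and not a successor. *)
Definition is_limit {T : Type} (lt : T -> T -> Prop) (a : T) : Prop :=
  (exists z, lt z a) /\ (forall z, lt z a -> exists w, lt z w /\ lt w a).

Definition is_succ_of {T : Type} (lt : T -> T -> Prop) (a y : T) : Prop :=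
  lt a y /\ ~ (exists z, lt a z /\ lt z y).

Definition Y_succ_limits {T : Type} (lt : T -> T -> Prop) (y : T) : Prop :=
  exists a, is_limit lt a /\ is_succ_of lt a y.

(* Positive half.  [0, omega_1) is countably compact: a sequence (x_k) has a
   cluster point, namely the least p below or equal to infinitely many x_k
   (it exists because every countable set is bounded in omega_1).  In any
   space, a nonempty closed set C in which every sequence clusters is strongly
   starcompact: otherwise one picks x_k in C outside St({x_0..x_(k-1)}, U),
   and the member of U around a cluster point of (x_k) contains two terms.
   Applied to C = closure of S, this gives for each n a single finite F_n
   whose star covers all of S, which is much more than Hurewicz requires.

   Every point of Y is isolated in Y, so the cover of Y by
   singletons has St(F, U) = F; but Y is unbounded in omega_1, so above the
   countably many finite sets F_n there is a point of Y missed by all stars. *)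

From Stdlib Require Import List Arith Lia Classical ClassicalEpsilon Cantor.

Lemma countable_union {T : Type} (A : nat -> T -> Prop) :
  (forall k, countable_set (A k)) -> countable_set (fun x => exists k, A k x).
Proof.
  intro HA.
  destruct (choice _ HA) as [f Hf].
  assert (Hindex : forall x, exists k, (exists j, A j x) -> A k x).
  { intro x. destruct (classic (exists j, A j x)) as [[j Hj] | Hn].
    - exists j. intros _. exact Hj.
    - exists 0. intro Hx. contradiction. }
  destruct (choice _ Hindex) as [idx Hidx].
  exists (fun x => Cantor.to_nat (idx x, f (idx x) x)).
  intros x y Hx Hy E.
  apply (f_equal Cantor.of_nat) in E. rewrite !Cantor.cancel_of_to in E.
  injection E as Eidx Ef. rewrite <- Eidx in Ef.
  apply (Hf (idx x)); [apply Hidx, Hx | rewrite Eidx; apply Hidx, Hy | exact Ef].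
Qed.

Lemma countable_insert {T : Type} (a : T) (A : T -> Prop) :
  countable_set A -> countable_set (fun y => y = a \/ A y).
Proof.
  intros [f Hf].
  exists (fun y => if excluded_middle_informative (y = a) then 0 else S (f y)).
  intros x y Hx Hy.
  destruct (excluded_middle_informative (x = a)) as [-> | Hxa];
  destruct (excluded_middle_informative (y = a)) as [-> | Hya];
  intro E; try discriminate.
  - reflexivity.
  - injection E as E. apply Hf; [tauto | tauto | exact E].
Qed.

Lemma least_element {T : Type} (lt : T -> T -> Prop) (Hwf : well_founded lt)
  (P : T -> Prop) :
  (exists x, P x) -> exists m, P m /\ forall y, lt y m -> ~ P y.
Proof.
  intros [x Hx]. revert Hx.
  induction x as [x IH] using (well_founded_ind Hwf). intro Hx.
  destruct (classic (exists y, lt y x /\ P y)) as [[y [Hyx Hy]] | Hn].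
  - exact (IH y Hyx Hy).
  - exists x. split; [exact Hx|]. intros y Hyx Hy. apply Hn. exists y; auto.
Qed.

Definition cluster_point {T : Type} (opn : (T -> Prop) -> Prop) (xs : nat -> T)
  (p : T) : Prop :=
  forall U, opn U -> U p -> forall N, exists k, N <= k /\ U (xs k).

Lemma cluster_point_in_closure {T : Type} (opn : (T -> Prop) -> Prop)
  (X S : T -> Prop) (xs : nat -> T) (p : T) :
  X p -> (forall k, sub_closure opn X S (xs k)) ->
  cluster_point (sub_open opn X) xs p -> sub_closure opn X S p.
Proof.
  intros Xp Hxs Hp. split; [exact Xp|]. intros V HV Vp.
  destruct (Hp V HV Vp 0) as [k [_ Vk]].
  exact (proj2 (Hxs k) V HV Vk).
Qed.

Fixpoint chosen_points {T : Type} (next : list T -> T) (k : nat) : list T :=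
  match k with
  | 0 => nil
  | S k => next (chosen_points next k) :: chosen_points next k
  end.

Lemma chosen_points_earlier {T : Type} (next : list T -> T) (i k : nat) :
  i < k -> In (next (chosen_points next i)) (chosen_points next k).
Proof.
  induction k as [|k IH]; intro Hik; [lia|]. simpl.
  destruct (Nat.eq_dec i k) as [-> | Hne]; [left; reflexivity|].
  right. apply IH. lia.
Qed.

Lemma chosen_points_in {T : Type} (next : list T -> T) (C : T -> Prop) :
  (forall l, C (next l)) -> forall k y, In y (chosen_points next k) -> C y.
Proof.
  intros HC k. induction k as [|k IH]; simpl; [tauto|].
  intros y [<- | Hy]; [apply HC | exact (IH y Hy)].
Qed.

Lemma star_separated_sequence {T : Type} (C : T -> Prop)
  (Us : (T -> Prop) -> Prop) (x0 : T) :
  C x0 ->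
  (forall l, (forall y, In y l -> C y) ->
     exists x, C x /\ ~ star (fun y => In y l) Us x) ->
  exists xs : nat -> T, (forall k, C (xs k)) /\
    forall i k V, i < k -> Us V -> V (xs i) -> ~ V (xs k).
Proof.
  intros Cx0 Hescape.
  assert (Hnext : forall l, exists x,
    C x /\ ((forall y, In y l -> C y) -> ~ star (fun y => In y l) Us x)).
  { intro l. destruct (classic (forall y, In y l -> C y)) as [Hl | Hl].
    - destruct (Hescape l Hl) as [x [Cx Hx]]. exists x. auto.
    - exists x0. split; [exact Cx0 | contradiction]. }
  destruct (choice _ Hnext) as [next Hspec].
  assert (HC : forall l, C (next l)) by (intro l; apply Hspec).
  exists (fun k => next (chosen_points next k)). split; [intro k; apply HC|].
  intros i k V Hik UV Vi Vk.
  apply (proj2 (Hspec (chosen_points next k)) (chosen_points_in next C HC k)).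
  exists V. split; [exact UV|]. split; [|exact Vk].
  exists (next (chosen_points next i)).
  split; [exact (chosen_points_earlier next i k Hik) | exact Vi].
Qed.

Lemma countably_compact_strongly_starcompact {T : Type}
  (opn : (T -> Prop) -> Prop) (C : T -> Prop) (Us : (T -> Prop) -> Prop)
  (x0 : T) :
  C x0 ->
  (forall xs, (forall k, C (xs k)) -> exists p, C p /\ cluster_point opn xs p) ->
  (forall V, Us V -> opn V) ->
  (forall x, C x -> exists V, Us V /\ V x) ->
  exists l, (forall y, In y l -> C y) /\
    forall x, C x -> star (fun y => In y l) Us x.
Proof.
  intros Cx0 Hcluster Hopen Hcov. apply NNPP; intro Hno.
  assert (Hescape : forall l, (forall y, In y l -> C y) ->
            exists x, C x /\ ~ star (fun y => In y l) Us x).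
  { intros l Hl. apply NNPP; intro Hn. apply Hno. exists l. split; [exact Hl|].
    intros x Cx. apply NNPP; intro Hx. apply Hn. exists x. auto. }
  destruct (star_separated_sequence C Us x0 Cx0 Hescape) as [xs [HC Hsep]].
  destruct (Hcluster xs HC) as [p [Cp Hp]].
  destruct (Hcov p Cp) as [W [UW Wp]].
  destruct (Hp W (Hopen W UW) Wp 0) as [k1 [_ Wk1]].
  destruct (Hp W (Hopen W UW) Wp (S k1)) as [k2 [Hk12 Wk2]].
  exact (Hsep k1 k2 W Hk12 UW Wk1 Wk2).
Qed.

Section Omega1.

Variable T : Type.
Variable lt : T -> T -> Prop.
Hypothesis Homega1 : is_omega1 lt.

Lemma ord_irrefl x : ~ lt x x.
Proof. destruct Homega1 as (H & _). apply H. Qed.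

Lemma ord_trans x y z : lt x y -> lt y z -> lt x z.
Proof. destruct Homega1 as (_ & H & _). apply H. Qed.

Lemma ord_total x y : lt x y \/ x = y \/ lt y x.
Proof. destruct Homega1 as (_ & _ & H & _). apply H. Qed.

Lemma ord_wf : well_founded lt.
Proof. destruct Homega1 as (_ & _ & _ & H & _). exact H. Qed.

Lemma omega1_inhabited : inhabited T.
Proof.
  destruct Homega1 as (_ & _ & _ & _ & Hunc & _).
  apply NNPP; intro Hn. apply Hunc. exists (fun _ => 0).
  intros x. exfalso. apply Hn. exact (inhabits x).
Qed.

(* omega_1 has uncountable cofinality: every sequence is bounded, since
   otherwise T would be the countable union of the countable sets
   {y | y <= s k}. *)
Lemma sequence_bounded (s : nat -> T) : exists b, forall k, lt (s k) b.
Proof.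
  destruct Homega1 as (_ & _ & _ & _ & Hunc & Hsegments).
  apply NNPP; intro Hunbounded.
  assert (Hcover : forall b, exists k, b = s k \/ lt b (s k)).
  { intro b. apply NNPP; intro Hb. apply Hunbounded. exists b. intro k.
    destruct (ord_total (s k) b) as [H | [H | H]]; [exact H | |];
      exfalso; apply Hb; exists k; [left; symmetry; exact H | right; exact H]. }
  apply Hunc.
  destruct (countable_union (fun k y => y = s k \/ lt y (s k))) as [f Hf].
  { intro k. apply countable_insert, Hsegments. }
  exists f. intros x y _ _ E. apply Hf; [apply Hcover | apply Hcover | exact E].
Qed.

Lemma list_bounded (l : list T) : exists b, forall x, In x l -> lt x b.
Proof.
  destruct omega1_inhabited as [t].
  destruct (sequence_bounded (fun k => nth k l t)) as [b Hb].
  exists b. intros x Hx.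
  destruct (In_nth l x t Hx) as [k [_ <-]]. apply Hb.
Qed.

Lemma successor_exists y : exists s, is_succ_of lt y s.
Proof.
  destruct (sequence_bounded (fun _ => y)) as [c Hc].
  destruct (least_element lt ord_wf (lt y)) as [s [Hys Hmin]];
    [exists c; exact (Hc 0)|].
  exists s. split; [exact Hys|]. intros [z [Hyz Hzs]]. exact (Hmin z Hzs Hyz).
Qed.

(* Above b lies a limit ordinal: the supremum of b, b+1, b+2, ... *)
Lemma limit_above b : exists g, is_limit lt g /\ lt b g.
Proof.
  destruct (choice _ successor_exists) as [succ Hsucc].
  set (bs := fun k => Nat.iter k succ b).
  destruct (sequence_bounded bs) as [c Hc].
  destruct (least_element lt ord_wf (fun g => forall k, lt (bs k) g))
    as [g [Hg Hmin]]; [exists c; exact Hc|].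
  exists g. split; [|exact (Hg 0)].
  split; [exists b; exact (Hg 0)|].
  intros z Hz.
  assert (Hk : exists k, ~ lt (bs k) z).
  { apply NNPP; intro Hn. apply (Hmin z Hz). intro k.
    apply NNPP; intro Hk. apply Hn. exists k. exact Hk. }
  destruct Hk as [k Hk].
  exists (bs (S k)). split; [|apply Hg].
  assert (Hstep : lt (bs k) (bs (S k))) by exact (proj1 (Hsucc (bs k))).
  destruct (ord_total (bs k) z) as [H | [H | H]];
    [contradiction | subst z; exact Hstep | exact (ord_trans _ _ _ H Hstep)].
Qed.

(* Countable compactness in interval form: the least p lying above
   infinitely many terms is a cluster point of the sequence, since every
   a < p lies below all but finitely many terms. *)
Lemma sequence_interval_cluster (xs : nat -> T) :
  exists p, forall a c, lbound lt a p -> ubound lt c p ->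
    forall N, exists k, N <= k /\ lbound lt a (xs k) /\ ubound lt c (xs k).
Proof.
  destruct (sequence_bounded xs) as [b Hb].
  destruct (least_element lt ord_wf
              (fun p => forall N, exists k, N <= k /\ ~ lt p (xs k)))
    as [p [Hp Hmin]].
  { exists b. intro N. exists N. split; [lia|].
    intro H. exact (ord_irrefl b (ord_trans _ _ _ H (Hb N))). }
  assert (Heventually : forall a, lbound lt a p ->
            exists N, forall k, N <= k -> lbound lt a (xs k)).
  { intros [a|] Ha; [|exists 0; intros; exact I]. simpl in *.
    apply NNPP; intro Hn. apply (Hmin a Ha). intro N.
    apply NNPP; intro HN. apply Hn. exists N. intros k Hk.
    apply NNPP; intro Hak. apply HN. exists k. auto. }
  exists p. intros a c Ha Hc N.
  destruct (Heventually a Ha) as [N' HN'].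
  destruct (Hp (max N N')) as [k [Hk Hkp]].
  exists k. split; [lia|]. split; [apply HN'; lia|].
  destruct c as [c|]; simpl in *; [|exact I].
  destruct (ord_total (xs k) p) as [H | [H | H]];
    [exact (ord_trans _ _ _ H Hc) | rewrite H; exact Hc | contradiction].
Qed.

Lemma omega1_countably_compact (xs : nat -> T) :
  exists p, cluster_point (sub_open (order_open lt) (fun _ : T => True)) xs p.
Proof.
  destruct (sequence_interval_cluster xs) as [p Hp]. exists p.
  intros V [U [HU HV]] Vp N.
  destruct (proj1 (HV p) Vp) as [Up _].
  destruct (HU p Up) as (a & c & Ha & Hc & Hinterval).
  destruct (Hp a c Ha Hc N) as [k [Hk [Hka Hkc]]].
  exists k. split; [exact Hk|]. apply HV. split; [exact (Hinterval _ Hka Hkc) | exact I].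
Qed.

Lemma omega1_set_strongly_star_Hurewicz :
  set_strongly_star_Hurewicz (order_open lt) (fun _ : T => True).
Proof.
  intros S _ [x0 Sx0] Us Hopen Hcov.
  set (closure := sub_closure (order_open lt) (fun _ : T => True) S).
  assert (Hclosure : forall x, S x -> closure x).
  { intros x Sx. split; [exact I|]. intros V _ Vx. exists x. auto. }
  assert (Hstage : forall n, exists l, (forall y, In y l -> closure y) /\
                     forall x, closure x -> star (fun y => In y l) (Us n) x).
  { intro n.
    apply (countably_compact_strongly_starcompact
             (sub_open (order_open lt) (fun _ : T => True)) closure (Us n) x0).
    - exact (Hclosure x0 Sx0).
    - intros xs Hxs. destruct (omega1_countably_compact xs) as [p Hp].
      exists p. split; [|exact Hp].
      exact (cluster_point_in_closure _ _ S xs p I Hxs Hp).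
    - exact (Hopen n).
    - exact (Hcov n). }
  destruct (choice _ Hstage) as [L HL].
  exists (fun n y => In y (L n)). split; [|split].
  - intro n. exists (L n). tauto.
  - intros n x Hx. exact (proj1 (HL n) x Hx).
  - intros x Sx. exists 0. intros n _. exact (proj2 (HL n) x (Hclosure x Sx)).
Qed.

Lemma Y_unbounded b : exists y, Y_succ_limits lt y /\ lt b y.
Proof.
  destruct (limit_above b) as [g [Hg Hbg]].
  destruct (successor_exists g) as [y Hy].
  exists y. split; [exists g; auto | exact (ord_trans _ _ _ Hbg (proj1 Hy))].
Qed.

(* Every point a+1 of Y is isolated: {a+1} = (a, a+2) meets nothing else. *)
Lemma Y_point_isolated y :
  Y_succ_limits lt y -> sub_open (order_open lt) (Y_succ_limits lt) (fun x => x = y).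
Proof.
  intro HY. pose proof HY as [a [_ [Hay Hgap]]].
  destruct (successor_exists y) as [s [Hys Hgap']].
  exists (fun x => lt a x /\ lt x s). split.
  - intros x [Hax Hxs]. exists (Some a), (Some s). simpl. auto.
  - intro x. split.
    + intros ->. auto.
    + intros [[Hax Hxs] _].
      destruct (ord_total x y) as [H | [H | H]]; [exfalso | exact H | exfalso].
      * apply Hgap. exists x. auto.
      * apply Hgap'. exists x. auto.
Qed.

(* Negative half: the cover of Y by singletons has St(F, U) = F, and a point
   of Y above all the (countably many, finite) F_n escapes every star. *)
Lemma Y_not_set_strongly_star_Hurewicz :
  ~ set_strongly_star_Hurewicz (order_open lt) (Y_succ_limits lt).
Proof.
  intro HS.
  destruct omega1_inhabited as [t].
  destruct (Y_unbounded t) as [y0 [HY0 _]].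
  set (singletons := fun V : T -> Prop =>
         exists y, Y_succ_limits lt y /\ forall x, V x <-> x = y).
  destruct (HS (Y_succ_limits lt) (fun x Hx => Hx) (ex_intro _ y0 HY0)
              (fun _ => singletons)) as [F [Hfin [_ Hstar]]].
  - intros n V [y [HY HV]].
    destruct (Y_point_isolated y HY) as [U [HU HUy]].
    exists U. split; [exact HU|]. intro x. rewrite HV. apply HUy.
  - intros n x [HYx _]. exists (fun z => z = x). split; [|reflexivity].
    exists x. split; [exact HYx | tauto].
  - destruct (choice _ Hfin) as [L HL].
    destruct (choice _ (fun n => list_bounded (L n))) as [B HB].
    destruct (sequence_bounded B) as [c Hc].
    destruct (Y_unbounded c) as [y [HY Hcy]].
    destruct (Hstar y HY) as [N HN].
    destruct (HN N (le_n N)) as [V [[y' [_ HV]] [[z [Fz Vz]] Vy]]].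
    apply HV in Vz. apply HV in Vy. subst z y.
    apply (ord_irrefl y').
    apply (ord_trans _ (B N)); [exact (HB N y' (proj1 (HL N y') Fz))|].
    exact (ord_trans _ _ _ (Hc N) Hcy).
Qed.

End Omega1.

Theorem mainTheorem18 (T : Type) (lt : T -> T -> Prop) (Homega1 : is_omega1 lt) :
  set_strongly_star_Hurewicz (order_open lt) (fun _ : T => True) /\
  ~ set_strongly_star_Hurewicz (order_open lt) (Y_succ_limits lt).
Proof.
  split.
  - exact (omega1_set_strongly_star_Hurewicz T lt Homega1).
  - exact (Y_not_set_strongly_star_Hurewicz T lt Homega1).
Qed.
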